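(* Let $\mathcal C$ be a decomposition finite category and $\mathscr B=\mathbb Z[\mathrm{Mor}(\mathcal C)]$ with coproduct $\Delta(\phi)=\sum_{\phi=\phi_1\circ\phi_0}\phi_0\otimes\phi_1$. Let $\mathcal C_\sim\subset\mathscr B$ be the subgroup spanned by all $f-g$ with $f\sim g$. Then $\Delta(\mathcal C_\sim)\subset\mathscr B\otimes\mathcal C_\sim+\mathcal C_\sim\otimes\mathscr B$, so $\Delta$ descends to a coassociative coproduct on $\mathscr B/\mathcal C_\sim$. Furthermore, after extending scalars to a commutative ring $R$ in which $|\mathrm{Iso}(X)|\,|\mathrm{Aut}(X)|$ is invertible for every object $X$ (e.g. $R=\mathbb Q$), the map $\bar\epsilon$ on $R[\mathrm{Mor}(\mathcal C)]/\mathcal C_\sim$ defined on classes of morphisms by $\bar\epsilon([f])=\frac{1}{|\mathrm{Iso}(X)|\,|\mathrm{Aut}(X)|}$ if $[f]=[\mathrm{id}_X]$ and $\bar\epsilon([f])=0$ otherwise, is a two-sided counit.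
   Context: A category is decomposition finite if every morphism has only finitely many factorizations $\phi=\phi_1\circ\phi_0$ (then $\mathrm{Aut}(X)$ and the set $\mathrm{Iso}(X)$ of objects isomorphic to $X$ are finite). For morphisms $f\colon X\to Y$ and $g\colon X'\to Y'$, $f\sim g$ means there are isomorphisms $\sigma\colon X\to X'$ and $\sigma'\colon Y\to Y'$ with $\sigma'\circ f=g\circ\sigma$; $[f]$ denotes the class of $f$ in $\mathscr B/\mathcal C_\sim$. Note $f\sim\mathrm{id}_X$ iff $f$ is an isomorphism between objects isomorphic to $X$. *)

From HB Require Import structures.
From mathcomp Require Import all_boot all_order all_algebra.
From Stdlib Require Import ClassicalEpsilon.
Set Implicit Arguments. Unset Strict Implicit. Unset Printing Implicit Defensive.
Import Order.TTheory GRing.Theory Num.Theory.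
Local Open Scope ring_scope.

(* A category presented by a type of objects, a (global) type of morphisms,
   domain/codomain maps, identities and composition.  [comp g f] is g ∘ f and
   is meaningful when [cod f = dom g]. *)
Record category := Category {
  Obj : Type;
  Mor : Type;
  dom : Mor -> Obj;
  cod : Mor -> Obj;
  idm : Obj -> Mor;
  comp : Mor -> Mor -> Mor;
  dom_idm : forall X, dom (idm X) = X;
  cod_idm : forall X, cod (idm X) = X;
  dom_comp : forall f g, cod f = dom g -> dom (comp g f) = dom f;
  cod_comp : forall f g, cod f = dom g -> cod (comp g f) = cod g;
  comp_idl : forall f, comp (idm (cod f)) f = f;
  comp_idr : forall f, comp f (idm (dom f)) = f;
  compA : forall f g h, cod f = dom g -> cod g = dom h ->
            comp h (comp g f) = comp (comp h g) f }.
Arguments dom {c} _.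
Arguments cod {c} _.
Arguments idm {c} _.
Arguments comp {c} _ _.

Definition listing (T : Type) (P : T -> Prop) (s : list T) : Prop :=
  List.NoDup s /\ forall x, List.In x s <-> P x.
Definition finite_set (T : Type) (P : T -> Prop) : Prop := exists s, listing P s.
Definition enum_of (T : Type) (P : T -> Prop) : list T :=
  match excluded_middle_informative (finite_set P) with
  | left H => proj1_sig (constructive_indefinite_description _ H)
  | right _ => nil
  end.
Definition ncard (T : Type) (P : T -> Prop) : nat := size (enum_of P).

Section Cat.
Variable C : category.

Definition is_factorization (phi : Mor C) (p : Mor C * Mor C) : Prop :=
  cod p.1 = dom p.2 /\ comp p.2 p.1 = phi.

Definition decomposition_finite : Prop :=
  forall phi : Mor C, finite_set (is_factorization phi).

Definition factorizations (phi : Mor C) : list (Mor C * Mor C) :=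
  enum_of (is_factorization phi).

Definition is_iso (f : Mor C) : Prop :=
  exists g, [/\ cod f = dom g, cod g = dom f,
                comp g f = idm (dom f) & comp f g = idm (cod f)].

Definition Aut (X : Obj C) : Mor C -> Prop :=
  fun f => [/\ dom f = X, cod f = X & is_iso f].
Definition Iso (X : Obj C) : Obj C -> Prop :=
  fun Y => exists f, [/\ dom f = X, cod f = Y & is_iso f].

Definition sim (f g : Mor C) : Prop :=
  exists s s' : Mor C, is_iso s /\ is_iso s' /\ dom s = dom f /\ cod s = dom g /\
    dom s' = cod f /\ cod s' = cod g /\ comp s' f = comp g s.
End Cat.

(* Free R-module on a type T: elements are (represented by) formal sums
   [seq (r_i, t_i)], with coefficient function [fcoef]. *)
Section Free.
Variable R : comRingType.

Definition dirac (T : Type) (t u : T) : R :=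
  if excluded_middle_informative (t = u) then 1 else 0.

Definition fcoef (T : Type) (s : seq (R * T)) (u : T) : R :=
  \sum_(p <- s) p.1 * dirac p.2 u.

(* "u is an element of R[T]" i.e. finitely supported *)
Definition is_elt (T : Type) (u : T -> R) : Prop :=
  exists s : seq (R * T), forall x, u x = fcoef s x.

Inductive span (T : Type) (G : (T -> R) -> Prop) : (T -> R) -> Prop :=
| span_gen u : G u -> span G u
| span_0 : span G (fun _ => 0)
| span_add u v : span G u -> span G v -> span G (fun x => u x + v x)
| span_scale r u : span G u -> span G (fun x => r * u x)
| span_ext u v : (forall x, u x = v x) -> span G u -> span G v.

Variable C : category.

Definition Csim_gen (u : Mor C -> R) : Prop :=
  exists f g, sim f g /\ forall x, u x = dirac f x - dirac g x.
Definition Csim : (Mor C -> R) -> Prop := span Csim_gen.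

(* B ⊗ C_sim + C_sim ⊗ B inside B ⊗ B = R[Mor × Mor] *)
Definition tens2 (u v : Mor C -> R) : Mor C * Mor C -> R :=
  fun p => u p.1 * v p.2.
Definition tens3 (u v w : Mor C -> R) : Mor C * Mor C * Mor C -> R :=
  fun p => u p.1.1 * v p.1.2 * w p.2.
Definition K2_gen (t : Mor C * Mor C -> R) : Prop :=
  exists u v, ((is_elt u /\ Csim v) \/ (Csim u /\ is_elt v)) /\
              forall x, t x = tens2 u v x.
Definition K2 := span K2_gen.
Definition K3_gen (t : Mor C * Mor C * Mor C -> R) : Prop :=
  exists u v w, [\/ [/\ Csim u, is_elt v & is_elt w],
                    [/\ is_elt u, Csim v & is_elt w] |
                    [/\ is_elt u, is_elt v & Csim w]] /\
              forall x, t x = tens3 u v w x.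
Definition K3 := span K3_gen.

Definition Delta (s : seq (R * Mor C)) : seq (R * (Mor C * Mor C)) :=
  flatten [seq [seq (p.1, q) | q <- factorizations p.2] | p <- s].
Definition Delta_l (t : seq (R * (Mor C * Mor C))) : seq (R * (Mor C * Mor C * Mor C)) :=
  flatten [seq [seq (p.1, (q.1, q.2, p.2.2)) | q <- factorizations p.2.1] | p <- t].
Definition Delta_r (t : seq (R * (Mor C * Mor C))) : seq (R * (Mor C * Mor C * Mor C)) :=
  flatten [seq [seq (p.1, (p.2.1, q.1, q.2)) | q <- factorizations p.2.2] | p <- t].
End Free.

Section Counit.
Variables (R : comUnitRingType) (C : category).

Definition epsbar (f : Mor C) : R :=
  match excluded_middle_informative (exists X, sim f (idm X)) with
  | left H => let X := proj1_sig (constructive_indefinite_description _ H) in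
              ((ncard (Iso X) * ncard (Aut X))%N%:R)^-1
  | right _ => 0
  end.

Definition epsl (t : seq (R * (Mor C * Mor C))) : seq (R * Mor C) :=
  [seq (p.1 * epsbar p.2.1, p.2.2) | p <- t].
Definition epsr (t : seq (R * (Mor C * Mor C))) : seq (R * Mor C) :=
  [seq (p.1 * epsbar p.2.2, p.2.1) | p <- t].
End Counit.

(* Similar morphisms f ~ g, witnessed by isomorphisms s and s', have their factorizations
   in bijection, (a, b) |-> (a s^-1, s' b), with corresponding factors similar; so Δ(f - g)
   is a sum of terms a ⊗ b - a' ⊗ b' = (a - a') ⊗ b + a' ⊗ (b - b').  Coassociativity holds
   already in B: both sides count the ways to write a morphism as a triple composite.
   For the counit, the factorizations φ = b a with a invertible correspond to the
   isomorphisms out of X = dom φ, of which there are |Iso(X)| |Aut(X)|; for each of them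
   b ~ φ, and ε̄(a) is the reciprocal of that number, so (ε̄ ⊗ id) Δ φ ≡ φ modulo C_sim.
   The other side is symmetric. *)

From Pilot Require Import Defs.
From Stdlib Require Import ClassicalEpsilon Classical List.
From HB Require Import structures.
From mathcomp Require Import all_boot all_order all_algebra ring.
Import Defs.
Import GRing.Theory.
Local Open Scope ring_scope.

Set Implicit Arguments. Unset Strict Implicit. Unset Printing Implicit Defensive.

Lemma listing_size (A : Type) (P Q : A -> Prop) L M :
  listing P L -> listing Q M -> (forall x, P x <-> Q x) -> size L = size M.
Proof.
move=> [ndL HL] [ndM HM] PQ; apply/eqP; rewrite eqn_leq.
by apply/andP; split; apply/leP; apply: NoDup_incl_length => // x;
  [move=> /HL /PQ /HM | move=> /HM /PQ /HL].
Qed.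

Lemma enum_ofP (A : Type) (P : A -> Prop) : finite_set P -> listing P (enum_of P).
Proof.
rewrite /enum_of; case: excluded_middle_informative => // H _.
exact: proj2_sig.
Qed.

Lemma ncard_listing (A : Type) (P : A -> Prop) L : listing P L -> ncard P = size L.
Proof.
move=> HL; have fin : finite_set P by exists L.
exact: listing_size (enum_ofP fin) HL (fun x => iff_refl _).
Qed.

Definition holds (P : Prop) : bool := if excluded_middle_informative P then true else false.

Lemma holdsP (P : Prop) : reflect P (holds P).
Proof. by rewrite /holds; case: excluded_middle_informative => H; constructor. Qed.

Lemma finite_set_cover (A : Type) (P : A -> Prop) (L : list A) :
  (forall x, P x -> In x L) -> finite_set P.
Proof.
move=> HL; exists (nodup (fun x y => excluded_middle_informative (x = y))
                         (filter (fun x => holds (P x)) L)).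
split; first exact: NoDup_nodup.
by move=> x; rewrite nodup_In filter_In; split=> [[_ /holdsP //]|Px]; split; [exact: HL|exact/holdsP].
Qed.

Lemma finite_set_image (A B : Type) (P : A -> Prop) (Q : B -> Prop) (m : A -> B) :
  finite_set P -> (forall y, Q y -> exists2 x, P x & m x = y) -> finite_set Q.
Proof.
move=> [L [_ HL]] surj; apply: (@finite_set_cover _ _ (map m L)) => y /surj [x Px <-].
by apply: in_map; apply/HL.
Qed.

Lemma listing_map (A B : Type) (P : A -> Prop) (Q : B -> Prop) (m : A -> B) L :
  listing P L -> (forall x, P x -> Q (m x)) ->
  (forall x y, P x -> P y -> m x = m y -> x = y) ->
  (forall y, Q y -> exists2 x, P x & m x = y) -> listing Q [seq m x | x <- L].
Proof.
move=> [ndL HL] PQ inj surj; split.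
  by apply: NoDup_map_NoDup_ForallPairs ndL => x y /HL Px /HL Py; apply: inj.
move=> y; rewrite in_map_iff; split; first by case=> x [<- /HL /PQ].
by move=> /surj [x Px <-]; exists x; split => //; apply/HL.
Qed.

Lemma ncard_bij (A B : Type) (P : A -> Prop) (Q : B -> Prop) (m : A -> B) :
  finite_set P -> (forall x, P x -> Q (m x)) ->
  (forall x y, P x -> P y -> m x = m y -> x = y) ->
  (forall y, Q y -> exists2 x, P x & m x = y) -> ncard Q = ncard P.
Proof.
move=> /enum_ofP HP PQ inj surj.
by rewrite (ncard_listing (listing_map HP PQ inj surj)) size_map.
Qed.

Lemma NoDup_list_prod (A B : Type) (l : list A) (l' : list B) :
  NoDup l -> NoDup l' -> NoDup (list_prod l l').
Proof.
elim: l => [|a l IH] /= nd nd'; first by constructor.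
inversion nd; subst; apply: NoDup_app; last 1 first.
- by move=> [x y] /in_map_iff [z [[<- _] _]] /in_prod_iff [].
- by apply: NoDup_map_NoDup_ForallPairs nd' => x y _ _ [].
- exact: IH.
Qed.

Lemma ncard_prod (A B : Type) (P : A -> Prop) (Q : B -> Prop) :
  finite_set P -> finite_set Q ->
  ncard (fun p : A * B => P p.1 /\ Q p.2) = (ncard P * ncard Q)%N.
Proof.
move=> /enum_ofP [ndP HP] /enum_ofP [ndQ HQ].
rewrite (@ncard_listing _ _ (list_prod (enum_of P) (enum_of Q))); first exact: length_prod.
split; first exact: NoDup_list_prod.
by move=> [x y]; rewrite in_prod_iff HP HQ.
Qed.

Section FreeModule.
Variable R : comNzRingType.

Definition ind (T : Type) (P : T -> Prop) (x : T) : R :=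
  if excluded_middle_informative (P x) then 1 else 0.

Lemma ind_true (T : Type) (P : T -> Prop) x : P x -> ind P x = 1.
Proof. by rewrite /ind; case: excluded_middle_informative. Qed.

Lemma ind_false (T : Type) (P : T -> Prop) x : ~ P x -> ind P x = 0.
Proof. by rewrite /ind; case: excluded_middle_informative. Qed.

Lemma dirac_eq (T : Type) (t : T) : dirac R t t = 1.
Proof. exact: ind_true. Qed.

Lemma dirac_neq (T : Type) (t u : T) : t <> u -> dirac R t u = 0.
Proof. exact: ind_false. Qed.

Lemma dirac_pair (T U : Type) (a x : T) (b y : U) :
  dirac R (a, b) (x, y) = dirac R a x * dirac R b y.
Proof.
have [<-|ax] := classic (a = x); last by rewrite (dirac_neq ax) mul0r dirac_neq //; congruence.
have [<-|bY] := classic (b = y); first by rewrite !dirac_eq mulr1.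
by rewrite dirac_eq (dirac_neq bY) mul1r dirac_neq //; congruence.
Qed.

Lemma fcoef_flatten (I T : Type) (g : I -> seq (R * T)) (s : seq I) u :
  fcoef (flatten [seq g i | i <- s]) u = \sum_(i <- s) fcoef (g i) u.
Proof. by rewrite /fcoef big_flatten /= big_map. Qed.

Lemma eq_big_In (I : Type) (s : seq I) (F G : I -> R) :
  (forall i, In i s -> F i = G i) -> \sum_(i <- s) F i = \sum_(i <- s) G i.
Proof.
elim: s => [|a s IH] FG; first by rewrite !big_nil.
by rewrite !big_cons FG /=; auto; rewrite IH // => i Hi; apply: FG; right.
Qed.

Lemma sum_dirac_listing (T : Type) (P : T -> Prop) L x :
  listing P L -> \sum_(t <- L) dirac R t x = ind P x.
Proof.
move=> [nd HL]; suff -> : \sum_(t <- L) dirac R t x = ind (fun y => In y L) x.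
  case: (classic (P x)) => Px; first by rewrite !ind_true //; apply/HL.
  by rewrite !ind_false // => /HL.
elim: L nd {HL} => [|a L IH] nd; first by rewrite big_nil ind_false.
inversion nd; subst; rewrite big_cons IH //.
have [<-|ax] := classic (a = x).
  by rewrite dirac_eq ind_false // ind_true ?addr0 //=; left.
rewrite dirac_neq // add0r.
case: (classic (In x L)) => H; first by rewrite !ind_true //=; right.
by rewrite !ind_false //= => -[].
Qed.

Lemma sum_ind_listing (T : Type) (P Q : T -> Prop) L :
  listing P L -> \sum_(t <- L) ind Q t = (ncard (fun t => P t /\ Q t))%:R.
Proof.
move=> [nd HL].
rewrite (@ncard_listing _ _ (filter (fun t => holds (Q t)) L)); last first.
  split; first exact: NoDup_filter.
  by move=> t; rewrite filter_In HL; split=> -[Pt /holdsP].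
clear nd HL; elim: L => [|t L IH]; first by rewrite big_nil.
rewrite big_cons IH /=; case: holdsP => Qt /=; last by rewrite ind_false // add0r.
by rewrite ind_true // nat1r.
Qed.

Lemma span_sum (I T : Type) (G : (T -> R) -> Prop) (s : seq I) (F : I -> T -> R) :
  (forall i, In i s -> span G (F i)) -> span G (fun x => \sum_(i <- s) F i x).
Proof.
elim: s => [|a s IH] FG.
  by apply: (span_ext (u := fun _ => 0)) => [x|]; [rewrite big_nil|apply: span_0].
apply: (span_ext (u := fun x => F a x + \sum_(i <- s) F i x)) => [x|].
  by rewrite big_cons.
apply: span_add; first by apply: FG; left.
by apply: IH => i Hi; apply: FG; right.
Qed.

End FreeModule.

Section Isomorphisms.
Variable C : category.
Implicit Types (f g h s : Mor C) (X : Obj C).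

Lemma iso_epi s g g' : is_iso s -> cod s = dom g -> cod s = dom g' ->
  comp g s = comp g' s -> g = g'.
Proof.
move=> [t [st ts ts1 st1]] sg sg' E.
by rewrite -(comp_idr g) -(comp_idr g') -sg -sg' -st1 !compA // E.
Qed.

Lemma iso_mono s g g' : is_iso s -> cod g = dom s -> cod g' = dom s ->
  comp s g = comp s g' -> g = g'.
Proof.
move=> [t [st ts ts1 st1]] gs g's E.
by rewrite -(comp_idl g) -(comp_idl g') gs g's -ts1 -!compA // E.
Qed.

Lemma iso_idm X : is_iso (idm X).
Proof.
have idK : comp (idm X) (idm X) = idm X by rewrite -{1}(cod_idm X) comp_idl.
by exists (idm X); rewrite dom_idm cod_idm idK.
Qed.

Lemma iso_comp f g : is_iso f -> is_iso g -> cod f = dom g -> is_iso (comp g f).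
Proof.
move=> [f' [F1 F2 F3 F4]] [g' [G1 G2 G3 G4]] fg.
exists (comp f' g'); rewrite ?dom_comp ?cod_comp //; try congruence.
split=> //.
- rewrite -(@compA _ (comp g f) g' f') ?cod_comp //; try congruence.
  by rewrite (@compA _ f g g') // G3 -fg comp_idl.
- rewrite -(@compA _ (comp f' g') f g) ?cod_comp //; try congruence.
  by rewrite (@compA _ g' f' f) //; try congruence; rewrite F4 fg -G2 comp_idl.
Qed.

Definition minv f : Mor C :=
  match excluded_middle_informative (is_iso f) with
  | left H => proj1_sig (constructive_indefinite_description _ H)
  | right _ => f
  end.

Lemma minvP f : is_iso f -> [/\ cod f = dom (minv f), cod (minv f) = dom f,
  comp (minv f) f = idm (dom f) & comp f (minv f) = idm (cod f)].
Proof.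
rewrite /minv; case: excluded_middle_informative => // H _.
exact: (proj2_sig (constructive_indefinite_description _ H)).
Qed.

Lemma iso_minv f : is_iso f -> is_iso (minv f).
Proof. by move=> /minvP [H1 H2 H3 H4]; exists f; split; congruence. Qed.

Lemma minvK f : is_iso f -> minv (minv f) = f.
Proof.
move=> If; have [H1 H2 H3 H4] := minvP If.
have [K1 K2 K3 K4] := minvP (iso_minv If).
apply: (@iso_epi (minv f)); [exact: iso_minv|congruence|congruence|].
by rewrite K3 H4 H1.
Qed.

Lemma comprK s g : is_iso s -> dom g = cod s -> comp (comp g s) (minv s) = g.
Proof.
move=> Is gs; have [H1 H2 H3 H4] := minvP Is.
by rewrite -compA ?H4 -?gs ?comp_idr //; congruence.
Qed.

Lemma compKr s g : is_iso s -> cod g = dom s -> comp (minv s) (comp s g) = g.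
Proof.
move=> Is gs; have [H1 H2 H3 H4] := minvP Is.
by rewrite compA ?H3 -?gs ?comp_idl //; congruence.
Qed.

Lemma comprVK s g : is_iso s -> dom g = dom s -> comp (comp g (minv s)) s = g.
Proof.
move=> Is gs; have [H1 H2 H3 H4] := minvP Is.
by rewrite -compA ?H3 -?gs ?comp_idr //; congruence.
Qed.

Lemma compKVr s g : is_iso s -> cod g = cod s -> comp s (comp (minv s) g) = g.
Proof.
move=> Is gs; have [H1 H2 H3 H4] := minvP Is.
by rewrite compA ?H4 -?gs ?comp_idl //; congruence.
Qed.

End Isomorphisms.

Section Similarity.
Variable C : category.
Implicit Types (a b f g s : Mor C).

Lemma factorization_dom f a b : is_factorization f (a, b) -> dom a = dom f.
Proof. by move=> [ab <-]; rewrite dom_comp. Qed.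

Lemma factorization_cod f a b : is_factorization f (a, b) -> cod b = cod f.
Proof. by move=> [ab <-]; rewrite cod_comp. Qed.

Definition sim_by s s' f g : Prop :=
  is_iso s /\ is_iso s' /\ dom s = dom f /\ cod s = dom g /\
    dom s' = cod f /\ cod s' = cod g /\ comp s' f = comp g s.

Lemma sim_byV s s' f g : sim_by s s' f g -> sim_by (minv s) (minv s') g f.
Proof.
move=> [Is [Is' [D1 [D2 [D3 [D4 E]]]]]].
have [A1 A2 A3 A4] := minvP Is; have [B1 B2 B3 B4] := minvP Is'.
do 6 (split; try exact: iso_minv; try congruence).
apply: (iso_epi Is); try (by rewrite dom_comp; congruence).
rewrite comprVK // -(@compA _ s g (minv s')); try congruence.
by rewrite -E compKr.
Qed.

Lemma sim_sym f g : sim f g -> sim g f.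
Proof. by move=> [s [s' Hs]]; exists (minv s), (minv s'); apply: sim_byV. Qed.

Lemma sim_precomp_iso s f : is_iso s -> cod s = dom f -> sim (comp f s) f.
Proof.
move=> Is sf; have idK : comp (idm (cod f)) (comp f s) = comp f s.
  by rewrite -{1}(cod_comp sf) comp_idl.
exists s, (idm (cod f)); rewrite idK dom_comp // cod_comp // dom_idm cod_idm.
by repeat split; try exact: iso_idm.
Qed.

Lemma sim_postcomp_iso s f : is_iso s -> cod f = dom s -> sim f (comp s f).
Proof.
move=> Is fs; have idK : comp (comp s f) (idm (dom f)) = comp s f.
  by rewrite -{1}(dom_comp fs) comp_idr.
exists (idm (dom f)), s; rewrite idK dom_comp // cod_comp // dom_idm cod_idm.
by repeat split; try exact: iso_idm.
Qed.

Lemma sim_is_iso f g : sim f g -> is_iso g -> is_iso f.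
Proof.
move=> [s [s' [Is [Is' [D1 [D2 [D3 [D4 E]]]]]]]] Ig.
have [B1 B2 B3 B4] := minvP Is'.
rewrite -(compKr Is' (g := f)) // E.
by apply: iso_comp; [apply: iso_comp| exact: iso_minv|]; rewrite ?cod_comp; congruence.
Qed.

Lemma factorization_sim_by s s' f g a b : sim_by s s' f g ->
  is_factorization f (a, b) -> is_factorization g (comp a (minv s), comp s' b).
Proof.
move=> [Is [Is' [D1 [D2 [D3 [D4 E]]]]]] Fab.
have [A1 A2 A3 A4] := minvP Is.
have Da := factorization_dom Fab; have Cb := factorization_cod Fab.
have [/= ab Eab] := Fab.
split=> /=; first by rewrite cod_comp ?dom_comp //; congruence.
rewrite -(@compA _ (comp a (minv s)) b s') ?cod_comp //; try congruence.
rewrite (@compA _ (minv s) a b) //; try congruence.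
rewrite Eab (@compA _ (minv s) f s'); try congruence.
by rewrite E comprK //; congruence.
Qed.

Lemma listing_factorizations_sim_by s s' f g L : sim_by s s' f g ->
  listing (is_factorization f) L ->
  listing (is_factorization g) [seq (comp q.1 (minv s), comp s' q.2) | q <- L].
Proof.
move=> Hs LF; have [Is [Is' [D1 [D2 [D3 [D4 E]]]]]] := Hs.
have [A1 A2 A3 A4] := minvP Is; have [B1 B2 B3 B4] := minvP Is'.
apply: (listing_map LF) => [[a b]|[a b] [a' b'] |[c d] Hcd].
- exact: factorization_sim_by.
- move=> Fab Fab' [/= E1 E2].
  have Da := factorization_dom Fab; have Da' := factorization_dom Fab'.
  have Cb := factorization_cod Fab; have Cb' := factorization_cod Fab'.
  congr (_, _); first by apply: (iso_epi (iso_minv Is) _ _ E1); congruence.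
  by apply: (iso_mono Is' _ _ E2); congruence.
- exists (comp c s, comp (minv s') d).
    by have := factorization_sim_by (sim_byV Hs) Hcd; rewrite minvK.
  have Dc := factorization_dom Hcd; have Cd := factorization_cod Hcd.
  by rewrite /= comprK ?compKVr //; congruence.
Qed.

End Similarity.

Section CountingIsomorphisms.
Variable C : category.
Hypothesis dfin : decomposition_finite C.
Implicit Types (f h phi : Mor C) (X Y : Obj C).

Definition isos_from X : Mor C -> Prop := fun f => dom f = X /\ is_iso f.

Lemma factorizationsP phi : listing (is_factorization phi) (factorizations phi).
Proof. exact: enum_ofP. Qed.

Lemma finite_isos_from X : finite_set (isos_from X).
Proof.
apply: (finite_set_image (m := fst) (dfin (idm X))) => f [<- If].
by have [H1 _ H3 _] := minvP If; exists (f, minv f).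
Qed.

Lemma finite_Iso X : finite_set (Iso X).
Proof.
apply: (finite_set_image (m := cod) (finite_isos_from X)) => Y [f [Df <- If]].
by exists f.
Qed.

Lemma finite_Aut X : finite_set (Aut X).
Proof.
by apply: (finite_set_image (m := id) (finite_isos_from X)) => f [Df _ If]; exists f.
Qed.

Definition iso_to X Y : Mor C :=
  match excluded_middle_informative (Iso X Y) with
  | left H => proj1_sig (constructive_indefinite_description _ H)
  | right _ => idm X
  end.

Lemma iso_toP X Y : Iso X Y ->
  [/\ dom (iso_to X Y) = X, cod (iso_to X Y) = Y & is_iso (iso_to X Y)].
Proof.
rewrite /iso_to; case: excluded_middle_informative => // H _.
exact: (proj2_sig (constructive_indefinite_description _ H)).
Qed.

(* Every isomorphism out of X is uniquely [iso_to X Y] after an automorphism of X. *)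
Lemma ncard_isos_from X : ncard (isos_from X) = (ncard (Iso X) * ncard (Aut X))%N.
Proof.
rewrite -(ncard_prod (finite_Iso X) (finite_Aut X)); symmetry.
apply: (ncard_bij (m := fun f => (cod f, comp (minv (iso_to X (cod f))) f)))
  (finite_isos_from X) _ _ _ => [f [Df If]|f g [Df If] [Dg Ig] [/= fg]|[Y a] [/= XY [Da Ca Ia]]].
- have XY : Iso X (cod f) by exists f.
  have [H1 H2 H3] := iso_toP XY; have [K1 K2 K3 K4] := minvP H3.
  split=> //=; split; rewrite ?dom_comp ?cod_comp; try congruence.
  by apply: iso_comp; [|exact: iso_minv|]; congruence.
- have XY : Iso X (cod f) by exists f.
  have [H1 H2 H3] := iso_toP XY; have [K1 K2 K3 K4] := minvP H3.
  rewrite -fg; apply: (iso_mono (iso_minv H3)); congruence.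
- have [H1 H2 H3] := iso_toP XY; have [K1 K2 K3 K4] := minvP H3.
  exists (comp (iso_to X Y) a).
    by split; [rewrite dom_comp|apply: iso_comp => //]; congruence.
  have Cc : cod (comp (iso_to X Y) a) = Y by rewrite cod_comp //; congruence.
  by rewrite /= Cc compKr //; congruence.
Qed.

Lemma ncard_isos_from_iso h : is_iso h ->
  ncard (isos_from (dom h)) = ncard (isos_from (cod h)).
Proof.
move=> Ih; have [K1 K2 K3 K4] := minvP Ih.
apply: (ncard_bij (m := fun f => comp f h)) (finite_isos_from _) _ _ _ =>
  [f [Df If]|f g [Df If] [Dg Ig]|g [Dg Ig]].
- by split; [rewrite dom_comp|apply: iso_comp].
- by apply: (iso_epi Ih); congruence.
- exists (comp g (minv h)); last by rewrite comprVK.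
  by split; [rewrite dom_comp|apply: iso_comp (iso_minv Ih) Ig _]; congruence.
Qed.

Lemma ncard_factorizations_iso_fst phi :
  ncard (fun q => is_factorization phi q /\ is_iso q.1) = ncard (isos_from (dom phi)).
Proof.
apply: (ncard_bij (m := fun f => (f, comp phi (minv f)))) (finite_isos_from _) _ _ _ =>
  [f [Df If]|f g _ _ [] //|[a b] [Fab Ia]].
- have [K1 K2 K3 K4] := minvP If.
  by split=> //; split=> /=; [rewrite dom_comp|rewrite comprVK]; congruence.
- have Da := factorization_dom Fab; have [/= ab Eab] := Fab.
  by exists a => //; rewrite -Eab comprK.
Qed.

Lemma ncard_factorizations_iso_snd phi :
  ncard (fun q => is_factorization phi q /\ is_iso q.2) = ncard (isos_from (cod phi)).
Proof.
apply: (ncard_bij (m := fun f => (comp f phi, minv f))) (finite_isos_from _) _ _ _ =>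
  [f [Df If]|f g [_ If] [_ Ig] [_ fg]|[a b] [Fab /= Ib]].
- have [K1 K2 K3 K4] := minvP If.
  split; last exact: iso_minv.
  by split=> /=; [rewrite cod_comp|rewrite compKr]; congruence.
- by rewrite -(minvK If) -(minvK Ig) fg.
- have [K1 K2 K3 K4] := minvP Ib.
  have Cb := factorization_cod Fab; have [/= ab Eab] := Fab.
  exists (minv b); first by split; [congruence|exact: iso_minv].
  by rewrite minvK // -Eab compKr.
Qed.

End CountingIsomorphisms.

Section Comultiplication.
Variables (R : comNzRingType) (C : category).
Hypothesis dfin : decomposition_finite C.
Implicit Types (x y z phi : Mor C) (u : Mor C -> R).

(* The coefficient of [w.1 ⊗ w.2] in Δ u. *)
Definition Deltaf u (w : Mor C * Mor C) : R :=
  if excluded_middle_informative (cod w.1 = dom w.2) then u (comp w.2 w.1) else 0.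

Lemma Deltaf_ext u v w : (forall m, u m = v m) -> Deltaf u w = Deltaf v w.
Proof. by move=> uv; rewrite /Deltaf uv. Qed.

Lemma Deltaf_coassoc u x y z :
  Deltaf (fun m => Deltaf u (m, z)) (x, y) = Deltaf (fun m => Deltaf u (x, m)) (y, z).
Proof.
rewrite /Deltaf /=.
case: (excluded_middle_informative (cod x = dom y)) => xy;
  case: (excluded_middle_informative (cod y = dom z)) => yz //=.
- rewrite cod_comp // dom_comp //.
  by do 2 case: excluded_middle_informative => //= ?; rewrite compA.
- by rewrite cod_comp //; case: excluded_middle_informative.
- by rewrite dom_comp //; case: excluded_middle_informative.
Qed.

Lemma sum_dirac_factorizations phi w :
  \sum_(q <- factorizations phi) dirac R q w = Deltaf (dirac R phi) w.
Proof.
rewrite (sum_dirac_listing R w (factorizationsP dfin phi)) /Deltaf.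
case: excluded_middle_informative => [ab|nab]; last by rewrite ind_false // => -[].
case: (classic (phi = comp w.2 w.1)) => [E|nE]; first by rewrite E dirac_eq ind_true.
by rewrite dirac_neq // ind_false // => -[_ /esym].
Qed.

Lemma fcoef_Delta (s : seq (R * Mor C)) w : fcoef (Delta s) w = Deltaf (fcoef s) w.
Proof.
rewrite /Delta fcoef_flatten /fcoef /Deltaf.
under eq_bigr => p _ do rewrite big_map -mulr_sumr sum_dirac_factorizations /Deltaf.
case: excluded_middle_informative => /= _ //.
by rewrite big1 // => p _; rewrite mulr0.
Qed.

Lemma fcoef_Delta_l (t : seq (R * (Mor C * Mor C))) x y z :
  fcoef (Delta_l t) (x, y, z) = Deltaf (fun m => fcoef t (m, z)) (x, y).
Proof.
rewrite /Delta_l fcoef_flatten /fcoef /Deltaf /=.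
under eq_bigr => p _.
  rewrite big_map (eq_bigr (fun q => p.1 * dirac R p.2.2 z * dirac R q (x, y))); last first.
    by move=> [a b] _; rewrite /= !dirac_pair; ring.
  rewrite -mulr_sumr sum_dirac_factorizations /Deltaf /=.
  over.
case: excluded_middle_informative => /= _; last by rewrite big1 // => p _; rewrite mulr0.
by apply: eq_bigr => -[r [a b]] _; rewrite /= dirac_pair; ring.
Qed.

Lemma fcoef_Delta_r (t : seq (R * (Mor C * Mor C))) x y z :
  fcoef (Delta_r t) (x, y, z) = Deltaf (fun m => fcoef t (x, m)) (y, z).
Proof.
rewrite /Delta_r fcoef_flatten /fcoef /Deltaf /=.
under eq_bigr => p _.
  rewrite big_map (eq_bigr (fun q => p.1 * dirac R p.2.1 x * dirac R q (y, z))); last first.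
    by move=> [a b] _; rewrite /= !dirac_pair; ring.
  rewrite -mulr_sumr sum_dirac_factorizations /Deltaf /=.
  over.
case: excluded_middle_informative => /= _; last by rewrite big1 // => p _; rewrite mulr0.
by apply: eq_bigr => -[r [a b]] _; rewrite /= dirac_pair; ring.
Qed.

Lemma Delta_coassoc (s : seq (R * Mor C)) w :
  fcoef (Delta_l (Delta s)) w = fcoef (Delta_r (Delta s)) w.
Proof.
case: w => [[x y] z]; rewrite fcoef_Delta_l fcoef_Delta_r.
rewrite (Deltaf_ext _ (fun m => fcoef_Delta s (m, z))).
rewrite (Deltaf_ext _ (fun m => fcoef_Delta s (x, m))).
exact: Deltaf_coassoc.
Qed.

End Comultiplication.

Section CoproductDescends.
Variables (R : comNzRingType) (C : category).
Hypothesis dfin : decomposition_finite C.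
Implicit Types (a b f g : Mor C) (u : Mor C -> R).

Lemma is_elt_dirac b : is_elt (dirac R b).
Proof. by exists [:: (1, b)] => x; rewrite /fcoef big_seq1 mul1r. Qed.

Lemma Csim_dirac_sim f g : sim f g -> Csim (fun x => dirac R f x - dirac R g x).
Proof. by move=> fg; apply: span_gen; exists f, g. Qed.

Lemma K2_dirac_sim a b a' b' : sim a a' -> sim b b' ->
  K2 (fun w => dirac R (a, b) w - dirac R (a', b') w).
Proof.
move=> aa' bb'.
apply: (span_ext (u := fun w => tens2 (fun x => dirac R a x - dirac R a' x) (dirac R b) w
                     + tens2 (dirac R a') (fun x => dirac R b x - dirac R b' x) w)).
  by move=> [x y]; rewrite /tens2 /= !dirac_pair; ring.
apply: span_add; apply: span_gen.
- exists (fun x => dirac R a x - dirac R a' x), (dirac R b); split=> //.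
  by right; split; [exact: Csim_dirac_sim|exact: is_elt_dirac].
- exists (dirac R a'), (fun x => dirac R b x - dirac R b' x); split=> //.
  by left; split; [exact: is_elt_dirac|exact: Csim_dirac_sim].
Qed.

Lemma K2_Deltaf_sim f g : sim f g ->
  K2 (fun w => Deltaf (dirac R f) w - Deltaf (dirac R g) w).
Proof.
move=> [s [s' Hs]]; have [Is [Is' [D1 [D2 [D3 [D4 _]]]]]] := Hs.
have LG := listing_factorizations_sim_by Hs (factorizationsP dfin f).
apply: (span_ext (u := fun w => \sum_(q <- factorizations f)
  (dirac R q w - dirac R (comp q.1 (minv s), comp s' q.2) w))).
  move=> w; rewrite sumrB -!(sum_dirac_factorizations R dfin).
  by rewrite (sum_dirac_listing R w (factorizationsP dfin g)) -(sum_dirac_listing R w LG) big_map.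
apply: span_sum => -[a b] /(proj2 (factorizationsP dfin f)) Fab.
have Da : dom a = dom s by rewrite D1 (factorization_dom Fab).
have Cb : cod b = dom s' by rewrite D3 (factorization_cod Fab).
apply: K2_dirac_sim; last exact: sim_postcomp_iso.
have [A1 A2 _ _] := minvP Is.
rewrite -{1}(comprVK Is Da); apply: sim_precomp_iso => //.
by rewrite dom_comp //; congruence.
Qed.

Lemma K2_Deltaf u : Csim u -> K2 (Deltaf u).
Proof.
elim=> {u} [u [f [g [fg Eu]]]| |u v _ Ku _ Kv|r u _ Ku|u v uv _ Ku].
- apply: (span_ext _ (K2_Deltaf_sim fg)) => w.
  by rewrite /Deltaf; case: excluded_middle_informative => /= _; rewrite ?Eu ?subr0.
- apply: (span_ext _ (@span_0 _ _ _)) => w.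
  by rewrite /Deltaf; case: excluded_middle_informative.
- apply: (span_ext _ (span_add Ku Kv)) => w.
  by rewrite /Deltaf; case: excluded_middle_informative => /= _; rewrite ?addr0.
- apply: (span_ext _ (span_scale r Ku)) => w.
  by rewrite /Deltaf; case: excluded_middle_informative => /= _; rewrite ?mulr0.
- apply: (span_ext _ Ku) => w.
  by rewrite /Deltaf; case: excluded_middle_informative => /= _; rewrite ?uv.
Qed.

Lemma Delta_Csim (s : seq (R * Mor C)) : Csim (fcoef s) -> K2 (fcoef (Delta s)).
Proof.
move=> /K2_Deltaf K; apply: (span_ext _ K) => w.
by rewrite fcoef_Delta.
Qed.

End CoproductDescends.

Section Counit.
Variables (R : comUnitRingType) (C : category).
Hypothesis dfin : decomposition_finite C.
Implicit Types (a b phi : Mor C).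

Lemma epsbarE a : epsbar R a = ind R (@is_iso C) a / (ncard (isos_from (dom a)))%:R.
Proof.
rewrite /epsbar; case: excluded_middle_informative => [H|nH] /=.
  case: (constructive_indefinite_description _ H) => X HX /=.
  have [s [s' [Is [_ [Ds [Cs _]]]]]] := HX.
  rewrite ind_true; last by apply: sim_is_iso HX _; exact: iso_idm.
  by rewrite mul1r -ncard_isos_from // -Ds (ncard_isos_from_iso dfin Is) Cs dom_idm.
rewrite ind_false ?mul0r // => Ia; apply: nH; exists (dom a); apply: sim_sym.
by rewrite -{2}(comp_idr a); apply: sim_postcomp_iso; rewrite ?cod_idm.
Qed.

Lemma epsbar_factorization_fst phi a b : is_factorization phi (a, b) ->
  epsbar R a = 0 \/ sim b phi.
Proof.
move=> [/= ab <-]; case: (classic (is_iso a)) => Ia.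
  by right; apply: sim_sym; apply: sim_precomp_iso.
by left; rewrite epsbarE ind_false ?mul0r.
Qed.

Lemma epsbar_factorization_snd phi a b : is_factorization phi (a, b) ->
  epsbar R b = 0 \/ sim a phi.
Proof.
move=> [/= ab <-]; case: (classic (is_iso b)) => Ib.
  by right; apply: sim_postcomp_iso.
by left; rewrite epsbarE ind_false ?mul0r.
Qed.

Hypothesis unitH : forall X : Obj C, ((ncard (Iso X) * ncard (Aut X))%N%:R : R) \is a GRing.unit.

Lemma sum_epsbar_fst phi : \sum_(q <- factorizations phi) epsbar R q.1 = 1.
Proof.
rewrite (eq_big_In (G := fun q => ind R (fun q => is_iso q.1) q / (ncard (isos_from (dom phi)))%:R)).
  rewrite -mulr_suml (sum_ind_listing _ _ (factorizationsP dfin phi)).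
  by rewrite ncard_factorizations_iso_fst // ncard_isos_from // divrr.
move=> [a b] /(proj2 (factorizationsP dfin phi)) [/= ab <-].
by rewrite epsbarE dom_comp.
Qed.

Lemma sum_epsbar_snd phi : \sum_(q <- factorizations phi) epsbar R q.2 = 1.
Proof.
rewrite (eq_big_In (G := fun q => ind R (fun q => is_iso q.2) q / (ncard (isos_from (cod phi)))%:R)).
  rewrite -mulr_suml (sum_ind_listing _ _ (factorizationsP dfin phi)).
  by rewrite ncard_factorizations_iso_snd // ncard_isos_from // divrr.
move=> [a b] /(proj2 (factorizationsP dfin phi)) [/= ab <-].
rewrite epsbarE; case: (classic (is_iso b)) => Ib; last by rewrite !ind_false ?mul0r.
by rewrite (ncard_isos_from_iso dfin Ib) cod_comp.
Qed.

Lemma Csim_counit (e : Mor C * Mor C -> R) (pi : Mor C * Mor C -> Mor C) :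
  (forall phi, \sum_(q <- factorizations phi) e q = 1) ->
  (forall phi q, is_factorization phi q -> e q = 0 \/ sim (pi q) phi) ->
  forall s : seq (R * Mor C),
    Csim (fun x => fcoef [seq (p.1 * e p.2, pi p.2) | p <- Delta s] x - fcoef s x).
Proof.
move=> e1 eS s.
apply: (span_ext (u := fun x => \sum_(p <- s) \sum_(q <- factorizations p.2)
  p.1 * e q * (dirac R (pi q) x - dirac R p.2 x))).
  move=> x; rewrite /fcoef big_map /Delta big_flatten big_map /= -sumrB.
  apply: eq_bigr => p _; rewrite big_map -[p.1 * _ in RHS]mul1r -(e1 p.2) mulr_suml -sumrB.
  by apply: eq_bigr => q _ /=; ring.
apply: span_sum => p _; apply: span_sum => q /(proj2 (factorizationsP dfin p.2)) /eS [->|S].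
  by apply: (span_ext _ (@span_0 _ _ _)) => x; rewrite mulr0 mul0r.
exact: span_scale (Csim_dirac_sim R S).
Qed.

Lemma counit_l (s : seq (R * Mor C)) :
  Csim (fun x => fcoef (epsl (Delta s)) x - fcoef s x).
Proof.
apply: (Csim_counit (e := fun q => epsbar R q.1) (pi := snd)) => [|phi [a b]].
  exact: sum_epsbar_fst.
exact: epsbar_factorization_fst.
Qed.

Lemma counit_r (s : seq (R * Mor C)) :
  Csim (fun x => fcoef (epsr (Delta s)) x - fcoef s x).
Proof.
apply: (Csim_counit (e := fun q => epsbar R q.2) (pi := fst)) => [|phi [a b]].
  exact: sum_epsbar_snd.
exact: epsbar_factorization_snd.
Qed.

End Counit.

Theorem proposition4p6 (C : category) :
  decomposition_finite C ->
  (* Δ(C_sim) ⊆ B ⊗ C_sim + C_sim ⊗ B   (over Z) *)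
  (forall s : seq (int * Mor C),
      Csim (fcoef s) -> K2 (fcoef (Delta s))) /\
  (* the descended coproduct on B / C_sim is coassociative *)
  (forall s : seq (int * Mor C),
      K3 (fun x => fcoef (Delta_l (Delta s)) x - fcoef (Delta_r (Delta s)) x)) /\
  (* over R with |Iso(X)||Aut(X)| invertible, ε̄ is a two-sided counit *)
  (forall R : comUnitRingType,
      (forall X : Obj C, ((ncard (Iso X) * ncard (Aut X))%N%:R : R) \is a GRing.unit) ->
      forall s : seq (R * Mor C),
        Csim (fun x => fcoef (epsl (Delta s)) x - fcoef s x) /\
        Csim (fun x => fcoef (epsr (Delta s)) x - fcoef s x)).
Proof.
move=> dfin; split; [|split].
- exact: Delta_Csim.
- move=> s; apply: (span_ext _ (@span_0 _ _ _)) => w.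
  by rewrite (Delta_coassoc dfin) subrr.
- by move=> R unitH s; split; [exact: counit_l|exact: counit_r].
Qed.
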